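(* Let $m=2^{l_m}$ with $l_m\ge 1$, let $(v_0,\dots,v_{m-1})$ be a Cantor basis of $\mathbb{F}_{2^m}$, and let $l$ be an integer with $0\le l<m/2$. Put $n=m\cdot 2^l$ and $$\Sigma := v_{l+m/2}+V_l=\{v_{l+m/2}+u : u\in V_l\},\qquad \Omega:=\Sigma\cup\phi_2(\Sigma)\cup\phi_2^{\circ 2}(\Sigma)\cup\cdots\cup\phi_2^{\circ(m-1)}(\Sigma).$$ Then $\mathrm{Ord}_{\phi_2}(\Sigma)=m$, the sets $\Sigma,\phi_2(\Sigma),\dots,\phi_2^{\circ(m-1)}(\Sigma)$ are pairwise disjoint (so $\Sigma$ is a Frobenius partition of $\Omega$), and $|\Omega|=n$.
   Context: A Cantor basis of $\mathbb{F}_{2^m}$ (for $m$ a power of $2$) is an $\mathbb{F}_2$-basis $(v_0,\dots,v_{m-1})$ of $\mathbb{F}_{2^m}$ with $v_0=1$ and $v_i^2+v_i=v_{i-1}$ for $0<i<m$. For $0\le i\le m$ let $V_0=\{0\}$ and $V_i=\mathrm{span}_{\mathbb{F}_2}\{v_0,\dots,v_{i-1}\}$. $\phi_2:\mathbb{F}_{2^m}\to\mathbb{F}_{2^m}$, $a\mapsto a^2$, is the Frobenius map; $\phi_2^{\circ j}$ denotes its $j$-fold iterate, and for a set $S$, $\phi_2(S)=\{\phi_2(s):s\in S\}$. For a set $S\subseteq\mathbb{F}_{2^m}$, $\mathrm{Ord}_{\phi_2}(S)$ is the least positive integer $j$ with $\phi_2^{\circ j}(S)=S$. Given $\mathrm{Ord}_{\phi_2}(\Sigma)=j$,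 $\Sigma$ is called a Frobenius partition of $\Omega$ if $\Omega=\Sigma\cup\phi_2(\Sigma)\cup\dots\cup\phi_2^{\circ(j-1)}(\Sigma)$ with these $j$ sets pairwise disjoint. *)

From HB Require Import structures.
From mathcomp Require Import all_boot all_order all_algebra all_fingroup all_field.
Set Implicit Arguments. Unset Strict Implicit. Unset Printing Implicit Defensive.
Import GRing.Theory.
Local Open Scope ring_scope.

(* F_2-span of v_0, ..., v_{i-1}: all 0/1 combinations; V_0 = {0}. *)
Definition Vspan (F : finFieldType) (v : nat -> F) (i : nat) : {set F} :=
  [set \sum_(j in S) v (nat_of_ord j) | S : {set 'I_i}].

Definition F2_basis (F : finFieldType) (m : nat) (v : nat -> F) : Prop :=
  (forall S : {set 'I_m}, \sum_(j in S) v (nat_of_ord j) = 0 -> S = set0)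
  /\ (forall x : F, exists S : {set 'I_m}, x = \sum_(j in S) v (nat_of_ord j)).

Definition cantor_basis (F : finFieldType) (m : nat) (v : nat -> F) : Prop :=
  F2_basis m v /\ v 0%N = 1 /\
  (forall i : nat, (0 < i < m)%N -> v i ^+ 2 + v i = v i.-1).

Definition phi2 (F : finFieldType) (a : F) : F := a ^+ 2.
Definition phi2_set (F : finFieldType) (j : nat) (S : {set F}) : {set F} :=
  [set iter j (@phi2 F) s | s in S].

Definition Ord_phi2_is (F : finFieldType) (S : {set F}) (j : nat) : Prop :=
  (0 < j)%N /\ phi2_set j S = S /\
  (forall k : nat, (0 < k < j)%N -> phi2_set k S <> S).

From HB Require Import structures.
From mathcomp Require Import all_boot all_order all_algebra all_fingroup all_field zify.
Import GRing.Theory.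
Local Open Scope ring_scope.

(* Write L x := x^2 + x, so that phi2 = id + L with id and L commuting
   additive maps.  For a Cantor basis L (v_i) = v_(i-1), so V_l is contained
   in the kernel of L^l while L^l (v_l) = v_0 = 1.  In characteristic 2,
   phi2^(2^t) = id + L^(2^t); with a := v_(l+m/2) this gives
   phi2^(m/2)(a) + a = v_l, which is not killed by L^l.  The set of d such
   that phi2^d(a) + a is killed by L^l is closed under addition and reduction
   modulo m, so it contains no d with 0 < d < m: it would then contain
   gcd(d, m), a power of 2 dividing m/2.  Hence no phi2^d with 0 < d < m maps
   a point of Sigma = a + V_l back into Sigma, which gives the order, the
   disjointness, and |Omega| = m |V_l| = m 2^l. *)

Lemma addn_closed_mod_pow2 {P : nat -> Prop} {k d} :
  P 0%N -> (forall a b, P a -> P b -> P (a + b)%N) ->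
  (forall a, P a -> P (a %% 2 ^ k.+1)%N) ->
  (0 < d < 2 ^ k.+1)%N -> P d -> P (2 ^ k)%N.
Proof.
move=> P0 PD Pmod /andP[d_gt0 d_lt] Pd.
have PM a q : P a -> P (a * q)%N.
  by move=> Pa; elim: q => [|q IHq]; rewrite ?muln0 // mulnS; apply: PD.
set g := gcdn d (2 ^ k.+1).
have g_le_d : (g <= d)%N by rewrite dvdn_leq // dvdn_gcdl.
have Pg : P g.
  have [c _ /dvdnP[e def_e]] := Bezoutl (2 ^ k.+1) d_gt0.
  have := Pmod _ (PM d e Pd).
  rewrite mulnC -def_e addnC modnMDl modn_small //.
  exact: leq_ltn_trans g_le_d d_lt.
have [s _ def_g] := dvdn_pfactor g k.+1 (isT : prime 2) (dvdn_gcdr _ _).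
have s_le_k : (s <= k)%N.
  by rewrite -ltnS -(ltn_exp2l _ _ (isT : 1 < 2)%N) -def_g (leq_ltn_trans g_le_d).
by rewrite -(subnKC s_le_k) expnD -def_g; apply: PM.
Qed.

Lemma card_bigcup_disjoint {T : finType} {A : nat -> {set T}} {m} s :
  (forall i j, (i < j < m)%N -> [disjoint A i & A j]) ->
  (forall i, (i < m)%N -> #|A i| = s) ->
  #|\bigcup_(i < m) A i| = (m * s)%N.
Proof.
move=> disjA cardA.
have disjA' (i j : 'I_m) : i != j -> [disjoint A i & A j].
  rewrite neq_ltn => /orP[ij | ji]; first by apply: disjA; rewrite ij /=.
  by rewrite disjoint_sym; apply: disjA; rewrite ji /=.
rewrite -sum1_card (partition_disjoint_bigcup _ _ disjA').
rewrite (eq_bigr (fun=> s)) => [|i _]; last by rewrite sum1_card cardA.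
by rewrite sum_nat_const card_ord.
Qed.

Lemma card_Vspan {F : finFieldType} {m l : nat} {v : nat -> F} :
  #|F| = (2 ^ m)%N ->
  (forall x : F, exists S : {set 'I_m}, x = \sum_(j in S) v j) ->
  (l <= m)%N -> #|Vspan v l| = (2 ^ l)%N.
Proof.
move=> cardF span l_le_m.
have card_subsets n : #|[set: {set 'I_n}]| = (2 ^ n)%N.
  by rewrite -powersetT card_powerset cardsT card_ord.
(* The 2^m subset sums of v_0, ..., v_(m-1) cover F, which has 2^m elements. *)
have sum_inj_m :
    {in [set: {set 'I_m}] &, injective (fun S : {set 'I_m} => \sum_(j in S) v j)}.
  apply/imset_injP; rewrite card_subsets -cardF -cardsT; apply/eqP/eq_card => x.
  by rewrite [RHS]inE; have [S ->] := span x; apply: imset_f.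
pose w (j : 'I_l) := widen_ord l_le_m j.
have w_inj : injective w by move=> i j /(congr1 val) /= /val_inj.
have sum_inj_l : injective (fun S : {set 'I_l} => \sum_(j in S) v j).
  move=> S1 S2 eqS; apply: (imset_inj w_inj); apply: sum_inj_m; rewrite ?inE //.
  by rewrite /= !(big_imset _ (in2W w_inj)).
by rewrite /Vspan (card_imset _ sum_inj_l) -card_subsets cardsT.
Qed.

Lemma iter_modn {T : Type} {f : T -> T} {m} :
  (forall x, iter m f x = x) -> forall d, iter d f =1 iter (d %% m) f.
Proof.
move=> per d x; rewrite {1}(divn_eq d m) iterD iterM.
by elim: (d %/ m)%N => //= q ->; apply: per.
Qed.

Section PeriodicImages.
Context {T : finType} {f : T -> T} {m : nat} {A : {set T}}.
Hypothesis f_period : forall x, iter m f x = x.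
Hypothesis iter_notin : forall d x, (0 < d < m)%N -> x \in A -> iter d f x \notin A.

Lemma iter_imset_period : [set iter m f x | x in A] = A.
Proof. by rewrite (eq_imset _ f_period) imset_id. Qed.

Lemma iter_imset_neq d : A != set0 -> (0 < d < m)%N -> [set iter d f x | x in A] != A.
Proof.
case/set0Pn=> x xA d_range; apply/eqP=> fdA.
by have /negP[] := iter_notin _ _ d_range xA; rewrite -fdA imset_f.
Qed.

Lemma disjoint_iter_imset i j : (i < j < m)%N ->
  [disjoint [set iter i f x | x in A] & [set iter j f x | x in A]].
Proof.
move=> /andP[ij jm]; rewrite disjoint_subset; apply/subsetP => _ /imsetP[x1 x1A ->].
rewrite inE; apply/imsetP => -[x2 x2A eq12].
have shift_range : (0 < m - j + i < m)%N by lia.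
have /negP[] := iter_notin _ _ shift_range x1A.
by rewrite iterD eq12 -iterD subnK ?(ltnW jm) // f_period.
Qed.

End PeriodicImages.

Section Char2.
Context {F : finFieldType}.
Hypothesis pcharF : 2%N \in [pchar F].

Local Notation phi := (@phi2 F).

Lemma iter_phi2D j : {morph iter j phi : x y / x + y}.
Proof.
by move=> x y; elim: j => //= j ->; rewrite /phi2 -!(pFrobenius_autE pcharF) rmorphD.
Qed.

Lemma iter_phi2E j (x : F) : iter j phi x = x ^+ (2 ^ j).
Proof. by elim: j => //= j ->; rewrite /phi2 -exprM expnSr. Qed.

Lemma iter_phi2_inj j : injective (iter j phi).
Proof.
elim: j => //= j IHj x y /(fmorph_inj (pFrobenius_aut pcharF)); exact: IHj.
Qed.

Definition artin_schreier (x : F) := x ^+ 2 + x.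
Local Notation L := artin_schreier.

Lemma iter_artin_schreierD k : {morph iter k L : x y / x + y}.
Proof.
move=> x y; elim: k => //= k ->; rewrite /L -!(pFrobenius_autE pcharF) rmorphD.
by rewrite addrACA.
Qed.

Lemma iter_artin_schreier0 k : iter k L 0 = 0.
Proof. by elim: k => //= k ->; rewrite /L expr0n addr0. Qed.

Lemma iter_artin_schreier_phi2 k j (x : F) :
  iter k L (iter j phi x) = iter j phi (iter k L x).
Proof.
elim: k => //= k ->; rewrite /L iter_phi2D !iter_phi2E.
by rewrite -!exprM mulnC.
Qed.

(* (id + L^N) o (id + L^N) = id + L^(2N), the two cross terms L^N cancelling. *)
Lemma iter_phi2_pow2 t (x : F) : iter (2 ^ t) phi x = x + iter (2 ^ t) L x.
Proof.
elim: t x => [|t IHt] x.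
  by rewrite /= /L /phi2 addrCA (addrr_pchar2 pcharF) addr0.
rewrite expnS mul2n -addnn !iterD !IHt iter_artin_schreierD.
by rewrite -addrA addKr_pchar2.
Qed.

Definition kerAS l (x : F) : Prop := iter l L x = 0.

Lemma kerASD l x y : kerAS l x -> kerAS l y -> kerAS l (x + y).
Proof. by rewrite /kerAS iter_artin_schreierD => -> ->; rewrite addr0. Qed.

Lemma kerAS_iter_phi2 l j x : kerAS l x -> kerAS l (iter j phi x).
Proof.
by rewrite /kerAS iter_artin_schreier_phi2 iter_phi2E => ->; rewrite expr0n expn_eq0.
Qed.

Section CantorBasis.
Context {m : nat} {v : nat -> F}.
Hypothesis v0 : v 0%N = 1.
Hypothesis vS : forall i, (0 < i < m)%N -> v i ^+ 2 + v i = v i.-1.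

Lemma iter_artin_schreier_cantor j i :
  (j <= i < m)%N -> iter j L (v i) = v (i - j).
Proof.
elim: j => [|j IHj] /andP[ji im]; first by rewrite subn0.
rewrite iterS IHj ?(ltnW ji) // /L vS ?subnS //.
by rewrite subn_gt0 ji (leq_ltn_trans (leq_subr _ _)).
Qed.

Lemma iter_artin_schreier_cantor_eq0 j i :
  (i < j)%N -> (i < m)%N -> iter j L (v i) = 0.
Proof.
move=> ij im.
rewrite -(subnK (ltnW ij)) iterD iter_artin_schreier_cantor ?leqnn ?im //.
have [n ->] : exists n, (j - i = n.+1)%N by exists (j - i).-1; rewrite prednK ?subn_gt0.
by rewrite subnn v0 iterSr /L expr1n (addrr_pchar2 pcharF) iter_artin_schreier0.
Qed.

Lemma Vspan_kerAS l u : (l <= m)%N -> u \in Vspan v l -> kerAS l u.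
Proof.
move=> l_le_m /imsetP[S _ ->]; rewrite /kerAS.
rewrite (big_morph (iter l L) (iter_artin_schreierD l) (iter_artin_schreier0 l)).
apply: big1 => i _; apply: iter_artin_schreier_cantor_eq0 => //.
exact: leq_trans l_le_m.
Qed.

Section HalfShift.
Context {k l : nat}.
Hypothesis m_eq : m = (2 ^ k.+1)%N.
Hypothesis phi2_period : forall x, iter m phi x = x.
Hypothesis l_lt : (l < 2 ^ k)%N.

Let a := v (l + 2 ^ k).
Let l_lt_m : (l < m)%N. Proof. by rewrite m_eq (ltn_trans l_lt) // ltn_exp2l. Qed.

Lemma iter_phi2_half_shift : iter (2 ^ k) phi a + a = v l.
Proof.
rewrite iter_phi2_pow2 addrAC (addrr_pchar2 pcharF) add0r.
rewrite iter_artin_schreier_cantor ?addnK // leq_addl.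
by rewrite m_eq expnS mul2n -addnn ltn_add2r.
Qed.

Lemma not_kerAS_iter_phi2_shift d :
  (0 < d < m)%N -> ~ kerAS l (iter d phi a + a).
Proof.
pose P d := kerAS l (iter d phi a + a).
have P0 : P 0%N by rewrite /P /kerAS /= (addrr_pchar2 pcharF) iter_artin_schreier0.
have PD d1 d2 : P d1 -> P d2 -> P (d1 + d2)%N.
  move=> P1 P2; rewrite /P iterD.
  have -> : iter d1 phi (iter d2 phi a) + a
          = iter d1 phi (iter d2 phi a + a) + (iter d1 phi a + a).
    by rewrite iter_phi2D -addrA addKr_pchar2.
  by apply: kerASD => //; apply: kerAS_iter_phi2.
have Pmod d' : P d' -> P (d' %% 2 ^ k.+1)%N.
  by rewrite /P -m_eq -(iter_modn phi2_period).
rewrite m_eq => d_range Pd.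
have := addn_closed_mod_pow2 P0 PD Pmod d_range Pd.
rewrite /P iter_phi2_half_shift /kerAS.
rewrite iter_artin_schreier_cantor ?leqnn // subnn v0.
by move/eqP; rewrite oner_eq0.
Qed.

Lemma iter_phi2_coset_notin d x : (0 < d < m)%N ->
  x \in [set a + u | u in Vspan v l] ->
  iter d phi x \notin [set a + u | u in Vspan v l].
Proof.
move=> d_range /imsetP[u1 u1V ->]; apply/negP => /imsetP[u2 u2V].
rewrite iter_phi2D => eq12; apply: (not_kerAS_iter_phi2_shift _ d_range).
have shift_eq : iter d phi a - a = u2 - iter d phi u1.
  by rewrite -(addrK (iter d phi u1) (iter d phi a)) eq12 addrAC [a + u2]addrC addrK.
rewrite !(oppr_pchar2 pcharF) in shift_eq; rewrite shift_eq.
have u_ker u : u \in Vspan v l -> kerAS l u by apply: Vspan_kerAS; apply: ltnW.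
by apply: kerASD; [apply: u_ker | apply/kerAS_iter_phi2/u_ker].
Qed.

End HalfShift.
End CantorBasis.
End Char2.

Theorem proposition1 (lm : nat) (F : finFieldType) (v : nat -> F) (l : nat) :
  (1 <= lm)%N ->
  #|F| = (2 ^ (2 ^ lm))%N ->
  cantor_basis (2 ^ lm) v ->
  (l < (2 ^ lm) %/ 2)%N ->
  let m := (2 ^ lm)%N in
  let n := (m * 2 ^ l)%N in
  let Sigma : {set F} := [set v (l + m %/ 2)%N + u | u in Vspan v l] in
  let Omega : {set F} := \bigcup_(j < m) phi2_set j Sigma in
  [/\ Ord_phi2_is Sigma m,
      (forall i j : nat, (i < j < m)%N -> [disjoint phi2_set i Sigma & phi2_set j Sigma])
    & #|Omega| = n].
Proof.
case: lm => // k _ cardF [[_ span] [v0 vS]].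
have half : (2 ^ k.+1 %/ 2 = 2 ^ k)%N by rewrite expnS mulKn.
rewrite half => l_lt m n Sigma Omega.
have pcharF : 2%N \in [pchar F] := card_finPcharP cardF (isT : prime 2).
have period x : iter m (@phi2 F) x = x by rewrite iter_phi2E -cardF expf_card.
have l_le_m : (l <= m)%N by rewrite ltnW // (ltn_trans l_lt) // ltn_exp2l.
have Sigma_eq : Sigma = [set v (l + 2 ^ k)%N + u | u in Vspan v l].
  by rewrite /Sigma /m half.
have Sigma_notin d x :
    (0 < d < m)%N -> x \in Sigma -> iter d (@phi2 F) x \notin Sigma.
  by rewrite Sigma_eq; move: (iter_phi2_coset_notin pcharF v0 vS (erefl m) period l_lt d x).
have card_Sigma : #|Sigma| = (2 ^ l)%N.
  by rewrite Sigma_eq (card_imset _ (addrI _)) (card_Vspan cardF span l_le_m).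
have Sigma_neq0 : Sigma != set0 by rewrite -card_gt0 card_Sigma expn_gt0.
split=> [|i j|]; first split.
- by rewrite expn_gt0.
- split=> [|j j_range]; first exact: iter_imset_period.
  exact/eqP/(iter_imset_neq Sigma_notin j Sigma_neq0 j_range).
- exact: disjoint_iter_imset period Sigma_notin i j.
rewrite /Omega (card_bigcup_disjoint (2 ^ l) (disjoint_iter_imset period Sigma_notin)) //.
by move=> i _; rewrite (card_imset _ (iter_phi2_inj pcharF i)).
Qed.
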